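(* Let $X=\{0,1\}$ and $k\ge2$. The classes $\mathcal A_k$ and $\mathcal R_k$ of aperiodic and of regular $k$-partitions of $X^\omega$ are each closed under the unary operations $q_0,\ldots,q_{k-1}$ and the binary operation $\cdot$.
   Context: $\mathcal R_k$ ($\mathcal A_k$): functions $X^\omega\to\bar k=\{0,\dots,k-1\}$ all of whose preimages are regular (aperiodic) $\omega$-languages (recognised by deterministic Muller acceptors, resp. with aperiodic automaton). Let $\tilde0=110000$, $\tilde1=110100$, $\tilde2=110010$ and $f:\{0,1,2\}^\omega\to\{0,1\}^\omega$, $f(x_0x_1\cdots)=\tilde x_0\tilde x_1\cdots$. For $A:X^\omega\to\bar k$ and $i<k$, $q_i(A)(\xi)=i$ if $\xi\notin f(\{0,1,2\}^\omega)$ or $\xi[n,n+6)=\tilde 2$ for infinitely many $n$; $q_i(A)(\xi)=A(\eta)$ if $\xi=f(\eta)$ with $\eta\in\{0,1\}^\omega$; $q_i(A)(\xi)=A(\eta)$ if $\xi=f(\sigma2\eta)$ with $\sigma\in\{0,1,2\}^*$ and $\eta\in\{0,1\}^\omega$. Let $g:X^\omega\to X^\omega$, $g(x_0x_1\cdots)=\tilde x_0\tilde2\tilde x_1\tilde2\cdots$ (and similarly on finite words). For $A,B:X^\omega\to\bar k$: $(A\cdot B)(\xi)=A(\eta)$ if $\xi=g(\eta)$; and $(A\cdot B)(\xi)=B(\eta)$ if $\xi=g(u)\,v\,\eta$ with $u\in X^*$, $\eta\in X^\omega$, and $v\in X^+$ the shortest word with $g(u)vX^\omega\cap g(X^\omega)=\emptyset$.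 *)

From mathcomp Require Import all_boot.
From Stdlib Require Import ClassicalEpsilon.

Set Implicit Arguments.
Unset Strict Implicit.
Unset Printing Implicit Defensive.

(* The alphabet X = {0,1} is [bool] (false = 0, true = 1);
   infinite words X^omega are functions nat -> bool. *)
Definition word := nat -> bool.
Set Warnings "-notation-overridden".

Record muller := Muller {
  mst : finType;
  minit : mst;
  mdelta : mst -> bool -> mst;
  macc : {set {set mst}}
}.

Fixpoint run (M : muller) (xi : word) (n : nat) : mst M :=
  match n with
  | 0 => minit M
  | n'.+1 => mdelta (run M xi n') (xi n')
  end.

Definition inf_often (M : muller) (xi : word) (q : mst M) : Prop :=
  forall N, exists n, N <= n /\ run M xi n = q.

Definition accepts (M : muller) (xi : word) : Prop :=
  exists2 S, S \in macc M & forall q, q \in S <-> @inf_often M xi q.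

Definition delta_star (M : muller) (q : mst M) (u : seq bool) : mst M :=
  foldl (@mdelta M) q u.

(* the automaton (transition structure) is aperiodic: its transition monoid
   is aperiodic, i.e. u^n and u^(n+1) act identically for some n. *)
Definition aperiodic_aut (M : muller) : Prop :=
  exists n, forall (u : seq bool) (q : mst M),
    delta_star q (flatten (nseq n u)) = delta_star q (flatten (nseq n.+1 u)).

Definition regular_lang (L : word -> Prop) : Prop :=
  exists M : muller, forall xi, L xi <-> accepts M xi.

Definition aperiodic_lang (L : word -> Prop) : Prop :=
  exists M : muller, aperiodic_aut M /\ forall xi, L xi <-> accepts M xi.

Definition kpart (k : nat) := word -> 'I_k.

Definition R_class (k : nat) (A : kpart k) : Prop :=
  forall i : 'I_k, regular_lang (fun xi => A xi = i).

Definition A_class (k : nat) (A : kpart k) : Prop :=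
  forall i : 'I_k, aperiodic_lang (fun xi => A xi = i).

Definition two3 : 'I_3 := @Ordinal 3 2 isT.
Definition bit3 (b : bool) : 'I_3 := @inord 2 (nat_of_bool b).

Definition tilde (a : 'I_3) : seq bool :=
  match val a with
  | 0 => [:: true; true; false; false; false; false]
  | 1 => [:: true; true; false; true; false; false]
  | _ => [:: true; true; false; false; true; false]
  end.

(* f : {0,1,2}^omega -> {0,1}^omega, f(x0 x1 ...) = tilde x0 tilde x1 ... *)
Definition f_code (zeta : nat -> 'I_3) : word :=
  fun n => nth false (tilde (zeta (n %/ 6))) (n %% 6).

Definition prepend (T : Type) (s : seq T) (w : nat -> T) : nat -> T :=
  fun n => if n < size s then nth (w 0) s n else w (n - size s).

Definition factor6 (xi : word) (n : nat) : seq bool := mkseq (fun j => xi (n + j)) 6.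

Definition q_case1 (xi : word) : Prop :=
  ~ (exists zeta : nat -> 'I_3, xi =1 f_code zeta)
  \/ (forall N, exists n, N <= n /\ factor6 xi n = tilde two3).

Definition q_case2 (xi : word) (eta : word) : Prop :=
  xi =1 f_code (fun n => bit3 (eta n)).

Definition q_case3 (xi : word) (eta : word) : Prop :=
  exists sigma : seq 'I_3,
    xi =1 f_code (prepend (rcons sigma two3) (fun n => bit3 (eta n))).

(* q_i(A).  The three cases are exhaustive and the chosen eta is unique,
   so the final fallback branch is never reached. *)
Definition q_op (k : nat) (i : 'I_k) (A : kpart k) : kpart k :=
  fun xi =>
  match excluded_middle_informative (q_case1 xi) with
  | left _ => i
  | right _ =>
    match excluded_middle_informative (exists eta, q_case2 xi eta) with
    | left H => A (proj1_sig (constructive_indefinite_description _ H))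
    | right _ =>
      match excluded_middle_informative (exists eta, q_case3 xi eta) with
      | left H => A (proj1_sig (constructive_indefinite_description _ H))
      | right _ => i
      end
    end
  end.

(* g : X^omega -> X^omega, g(x0 x1 ...) = tilde x0 tilde 2 tilde x1 tilde 2 ... *)
Definition g_code (eta : word) : word :=
  fun n =>
    let r := n %% 12 in
    if r < 6 then nth false (tilde (bit3 (eta (n %/ 12)))) r
    else nth false (tilde two3) (r - 6).

Definition g_fin (u : seq bool) : seq bool :=
  flatten [seq tilde (bit3 b) ++ tilde two3 | b <- u].

Definition g_bad (w : seq bool) : Prop :=
  forall zeta : word, ~ (forall j, j < size w -> g_code zeta j = nth false w j).

Definition dot_case2 (xi : word) (eta : word) : Prop :=
  exists (u v : seq bool),
    [/\ v != [::],
        xi =1 prepend (g_fin u ++ v) eta,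
        g_bad (g_fin u ++ v)
      & forall m, m < size v -> ~ g_bad (g_fin u ++ take m v)].

(* (A . B).  The cases are exhaustive and eta is uniquely determined, so the
   fallback branch is never reached. *)
Definition dot_op (k : nat) (A B : kpart k) : kpart k :=
  fun xi =>
  match excluded_middle_informative (exists eta, xi =1 g_code eta) with
  | left H => A (proj1_sig (constructive_indefinite_description _ H))
  | right _ =>
    match excluded_middle_informative (exists eta, dot_case2 xi eta) with
    | left H => B (proj1_sig (constructive_indefinite_description _ H))
    | right _ => A (fun _ => false)
    end
  end.

(* Both operations are computed by cascade products.  A decoder reads the
   input in blocks of length 6 (for [q_op]) or 12 (for [dot_op]), checks that
   every block is a codeword of f, resp. g, remembers the last codeword, and
   dies on the first letter that leaves the prefixes of codeword sequences.
   Every completed codeword is translated into an action on a copy of the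
   automaton for A (or B): feed it a bit, restart it, or do nothing; for
   [dot_op] the death of the decoder restarts the copy of B, which then reads
   the input directly.  The Muller table is a condition on the states visited
   infinitely often: a dead decoder or infinitely many blocks [tilde 2] give
   the constant value [i] of [q_i]; otherwise the second components visited
   infinitely often are the infinity set of the simulated run.  A cascade
   product of aperiodic automata is aperiodic, and both decoders are
   aperiodic since every element x of their transition monoids, computed
   explicitly, satisfies x^5 = x^6. *)

From mathcomp Require Import all_boot zify.
From Stdlib Require Import ClassicalEpsilon Classical FunctionalExtensionality.

Set Implicit Arguments.
Unset Strict Implicit.
Unset Printing Implicit Defensive.

(** * Infinity sets of Muller automata *)

Definition decide (P : Prop) : bool :=
  if excluded_middle_informative P then true else false.

Lemma decideP (P : Prop) : reflect P (decide P).
Proof. by rewrite /decide; case: excluded_middle_informative => h; constructor. Qed.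

Definition infinitely (P : nat -> Prop) : Prop := forall N, exists n, N <= n /\ P n.

Section InfinitySet.

Variable M : muller.

Definition inf_set (xi : word) : {set mst M} := [set q | decide (inf_often xi q)].

Lemma mem_inf_set xi q : q \in inf_set xi <-> inf_often xi q.
Proof. by rewrite inE; split => /decideP. Qed.

Lemma acceptsE xi : accepts M xi <-> inf_set xi \in macc M.
Proof.
split=> [[S SM HS] | xiM]; last by exists (inf_set xi) => // q; rewrite mem_inf_set.
suff -> : inf_set xi = S by [].
by apply/setP => q; apply/idP/idP => [/mem_inf_set/HS | /HS/mem_inf_set].
Qed.

End InfinitySet.

Lemma finite_pigeonhole (T : finType) (r : nat -> T) (p : pred T) :
  infinitely (fun n => p (r n)) ->
  exists2 q, p q & infinitely (fun n => r n = q).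
Proof.
move=> pr; apply: NNPP => no_q.
have bounded q : p q -> exists N, forall n, N <= n -> r n <> q.
  move=> pq; apply: NNPP => unb; apply: no_q; exists q => // N.
  by apply: NNPP => none; apply: unb; exists N => n Nn rnq; apply: none; exists n.
have [N HN] : exists N, forall n, N <= n -> (r n \in enum T) ==> ~~ p (r n).
  elim: (enum T) => [|x s [N HN]]; first by exists 0.
  have [px | npx] := boolP (p x).
  - have [N' HN'] := bounded x px; exists (maxn N N') => n.
    rewrite geq_max in_cons => /andP [/HN hN /HN' hN'].
    by case: eqP.
  - exists N => n /HN hN; rewrite in_cons.
    by case: eqP => [-> | _]; rewrite ?npx.
have [n [Nn prn]] := pr N.
by move: (HN n Nn); rewrite mem_enum prn.
Qed.

Lemma exists_inf_setP (M : muller) xi (p : pred (mst M)) :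
  [exists q in inf_set M xi, p q] <-> infinitely (fun n => p (run M xi n)).
Proof.
split.
- case/exists_inP => q /mem_inf_set qinf pq N.
  by have [n [Nn rnq]] := qinf N; exists n; rewrite rnq.
- case/finite_pigeonhole => q pq qinf.
  by apply/exists_inP; exists q => //; apply/mem_inf_set.
Qed.

Lemma inf_set_neq0 (M : muller) xi : inf_set M xi != set0.
Proof.
have [|q _ qinf] := @finite_pigeonhole _ (run M xi) predT; first by move=> N; exists N.
by apply/set0Pn; exists q; apply/mem_inf_set.
Qed.

Definition proj_set (T U : finType) (pi : T -> option U) (S : {set T}) : {set U} :=
  [set a | [exists q in S, pi q == Some a]].

Section Projection.

Variables (C M : muller) (pi : mst C -> option (mst M)) (xi : word).

Lemma proj_inf_set0 N :
  (forall n, N <= n -> pi (run C xi n) = None) -> proj_set pi (inf_set C xi) = set0.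
Proof.
move=> piN; apply/setP => a; rewrite !inE; apply/exists_inP => -[q /mem_inf_set qinf].
by have [n [Nn <-]] := qinf N; rewrite piN.
Qed.

Lemma proj_inf_set (eta : word) N L : 0 < L ->
  (forall n, N <= n -> pi (run C xi n) = Some (run M eta ((n - N) %/ L))) ->
  proj_set pi (inf_set C xi) = inf_set M eta.
Proof.
move=> L_gt0 sim; apply/setP => a; rewrite inE; apply/idP/idP.
- case/exists_inP => q /mem_inf_set qinf /eqP piq; apply/mem_inf_set => N'.
  have [n [n_ge rnq]] := qinf (N + N' * L).
  exists ((n - N) %/ L); split; first by rewrite leq_divRL //; lia.
  by move: (sim n (leq_trans (leq_addr _ _) n_ge)); rewrite rnq piq => -[].
- move/mem_inf_set => ainf; apply/(@exists_inf_setP C xi (fun q => pi q == Some a)) => N'.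
  have [m [m_ge <-]] := ainf N'.
  exists (N + m * L); split; first by nia.
  by rewrite sim ?leq_addr // addKn mulnK.
Qed.

End Projection.

Lemma mkseqD (T : Type) (f : nat -> T) n j :
  mkseq f (n + j) = mkseq f n ++ mkseq (fun t => f (n + t)) j.
Proof. by rewrite /mkseq iotaD map_cat add0n -[in iota n j](addn0 n) iotaDl -map_comp. Qed.

Lemma take_mkseq (T : Type) (f : nat -> T) r n : r <= n -> take r (mkseq f n) = mkseq f r.
Proof. by move=> rn; rewrite -(subnKC rn) mkseqD take_size_cat // size_mkseq. Qed.

Lemma eq_in_mkseq (T : Type) (f g : nat -> T) n :
  (forall j, j < n -> f j = g j) -> mkseq f n = mkseq g n.
Proof. by move=> fg; apply/eq_in_map => j; rewrite mem_iota add0n => /andP [_ /fg]. Qed.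

Definition wpow (T : Type) (u : seq T) n := flatten (nseq n u).

Lemma wpowS (T : Type) (u : seq T) n : wpow u n.+1 = u ++ wpow u n.
Proof. by []. Qed.

Lemma wpowSr (T : Type) (u : seq T) n : wpow u n.+1 = wpow u n ++ u.
Proof. by rewrite /wpow -addn1 nseqD flatten_cat /= cats0. Qed.

Lemma wpowD (T : Type) (u : seq T) m n : wpow u (m + n) = wpow u m ++ wpow u n.
Proof. by rewrite /wpow nseqD flatten_cat. Qed.

Lemma delta_star_cat (M : muller) (q : mst M) u v :
  delta_star q (u ++ v) = delta_star (delta_star q u) v.
Proof. exact: foldl_cat. Qed.

Lemma run_delta_star (M : muller) xi n : run M xi n = delta_star (minit M) (mkseq xi n).
Proof. by elim: n => // n IH; rewrite [LHS]/= IH mkseqS /delta_star foldl_rcons. Qed.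

Lemma delta_star_wpow_stable (M : muller) N N' :
  (forall u (q : mst M), delta_star q (wpow u N) = delta_star q (wpow u N.+1)) ->
  N <= N' -> forall u (q : mst M), delta_star q (wpow u N') = delta_star q (wpow u N'.+1).
Proof.
move=> stable /subnK <- u q.
by rewrite -addnS !wpowD !(delta_star_cat q (wpow u (N' - N))) stable.
Qed.

(** * Cascade products of a block decoder with two automata *)

Inductive action := Idle | Feed of bool | Restart.

Section Bottom.

Variables MA MB : muller.

Definition act (a : action) (s : mst MA + mst MB) : mst MA + mst MB :=
  match a, s with
  | Idle, _ => s
  | Feed b, inl x => inl (mdelta x b)
  | Feed b, inr y => inr (mdelta y b)
  | Restart, _ => inr (minit MB)
  end.

Definition acts s (w : seq action) := foldl (fun s a => act a s) s w.

Definition is_restart (a : action) := if a is Restart then true else false.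
Definition fed_bit (a : action) := if a is Feed b then Some b else None.

Lemma acts_restart w s s' : has is_restart w -> acts s w = acts s' w.
Proof. by elim: w s s' => [//|[|b|] w IH] s s' //= /IH; apply. Qed.

Lemma acts_no_restart w s : ~~ has is_restart w ->
  acts s w = match s with
             | inl x => inl (delta_star x (pmap fed_bit w))
             | inr y => inr (delta_star y (pmap fed_bit w))
             end.
Proof. by elim: w s => [|[|b|] w IH] [x|y] //= /IH ->. Qed.

Lemma acts_feed y w : acts (inr y) [seq Feed b | b <- w] = inr (delta_star y w).
Proof. by elim: w y => //= b w IH y; rewrite IH. Qed.

Lemma bottom_aperiodic : aperiodic_aut MA -> aperiodic_aut MB ->
  exists N, forall w s, acts s (wpow w N) = acts s (wpow w N.+1).
Proof.
move=> [NA stableA] [NB stableB]; exists (maxn NA NB).+1 => w s.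
have [restart | no_restart] := boolP (has is_restart w).
  by rewrite !wpowSr /acts !foldl_cat; apply: acts_restart.
have no_restart_pow m : ~~ has is_restart (wpow w m).
  by elim: m => // m IH; rewrite wpowS has_cat negb_or no_restart.
have pmap_pow m : pmap fed_bit (wpow w m) = wpow (pmap fed_bit w) m.
  by elim: m => // m IH; rewrite !wpowS pmap_cat IH.
rewrite !acts_no_restart // !pmap_pow; case: s => x.
- by rewrite (delta_star_wpow_stable stableA) // ltnW // ltnS leq_maxl.
- by rewrite (delta_star_wpow_stable stableB) // ltnW // ltnS leq_maxr.
Qed.

End Bottom.

(* The decoder reads a word block by block, each block of length [L] having to
   be one of the [codes]; its state is [None] once a block fails, and
   [Some (l, p)] otherwise, where [l] is the index of the last completed
   block and [p] the part of the current block read so far. *)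
Definition dstate := option (nat * seq bool).

Section Decoder.

Variables (L : nat) (codes : seq (seq bool)).

Definition dstep (x : dstate) (b : bool) : dstate :=
  if x is Some (l, p) then
    if has (prefix (rcons p b)) codes then
      if size (rcons p b) == L then Some (index (rcons p b) codes, [::])
      else Some (l, rcons p b)
    else None
  else None.

Definition dinit : dstate := Some (0, [::]).

Definition drun (xi : word) n := foldl dstep dinit (mkseq xi n).

Definition block (xi : word) m := mkseq (fun j => xi (m * L + j)) L.

Definition last_code (xi : word) m := if m is m'.+1 then index (block xi m') codes else 0.

Lemma drunD xi n j : drun xi (n + j) = foldl dstep (drun xi n) (mkseq (fun t => xi (n + t)) j).
Proof. by rewrite /drun mkseqD foldl_cat. Qed.

Lemma foldl_dstep_dead w : foldl dstep None w = None.
Proof. by elim: w. Qed.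

Lemma drun_dead xi n n' : drun xi n = None -> n <= n' -> drun xi n' = None.
Proof. by move=> dead /subnKC <-; rewrite drunD dead foldl_dstep_dead. Qed.

Lemma eq_drun xi xi' n : (forall j, j < n -> xi j = xi' j) -> drun xi n = drun xi' n.
Proof. by move=> eq_xi; rewrite /drun (eq_in_mkseq eq_xi). Qed.

Lemma has_prefix_catl u v : has (prefix (u ++ v)) codes -> has (prefix u) codes.
Proof. by case/hasP => c c_in /catl_prefix pc; apply/hasP; exists c. Qed.

Hypothesis L_gt0 : 0 < L.
Hypothesis size_codes : all (fun c => size c == L) codes.
Hypothesis codes_neq0 : codes != [::].

Lemma has_prefix_nil : has (prefix [::]) codes.
Proof. by case: codes codes_neq0 => // c s _; rewrite /= prefix0s. Qed.

Lemma has_prefix_full w : size w = L -> has (prefix w) codes = (w \in codes).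
Proof.
move=> size_w; apply/hasP/idP => [[c c_in] | w_in]; last by exists w; rewrite ?prefix_refl.
have /eqP size_c := allP size_codes c c_in.
by rewrite prefixE size_w -size_c take_size => /eqP <-.
Qed.

Lemma foldl_dstep l p w : has (prefix p) codes -> size p < L -> size p + size w <= L ->
  foldl dstep (Some (l, p)) w =
  if has (prefix (p ++ w)) codes then
    if size (p ++ w) == L then Some (index (p ++ w) codes, [::]) else Some (l, p ++ w)
  else None.
Proof.
elim: w p => [|b w IH] p pre_p p_lt p_w_le /=; first by rewrite cats0 pre_p ltn_eqF.
rewrite -cat_rcons; case: ifP => pre_pb; last first.
  by rewrite foldl_dstep_dead; case: ifP => // /has_prefix_catl; rewrite pre_pb.
case: ifP => [/eqP size_pb | /eqP size_pb].
  have -> : w = [::] by apply: size0nil; move: p_w_le size_pb; rewrite size_rcons /=; lia.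
  by rewrite cats0 pre_pb size_pb eqxx.
by apply: IH; rewrite // size_rcons; move: size_pb p_w_le; rewrite size_rcons /=; lia.
Qed.

Lemma drun_blocks xi m : drun xi (m * L) =
  if all (fun j => block xi j \in codes) (iota 0 m) then Some (last_code xi m, [::]) else None.
Proof.
elim: m => [//|m IH]; rewrite mulSnr drunD -/(block xi m) IH -addn1 iotaD all_cat /= andbT.
case: ifP => _ /=; last by rewrite foldl_dstep_dead.
rewrite foldl_dstep ?has_prefix_nil ?size_mkseq // has_prefix_full ?size_mkseq //.
by case: ifP => // _; rewrite eqxx addn1.
Qed.

Lemma drun_in_block xi m r l : r < L -> drun xi (m * L) = Some (l, [::]) ->
  drun xi (m * L + r) =
  if has (prefix (take r (block xi m))) codes then Some (l, take r (block xi m)) else None.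
Proof.
move=> r_lt block_start; rewrite drunD block_start.
rewrite foldl_dstep /= ?has_prefix_nil ?size_mkseq ?(ltnW r_lt) //.
by rewrite (ltn_eqF r_lt) /block take_mkseq // ltnW.
Qed.

Lemma drun_codewords xi : (forall m, block xi m \in codes) -> forall n,
  drun xi n = Some (last_code xi (n %/ L), take (n %% L) (block xi (n %/ L))).
Proof.
move=> codewords n; rewrite {1}(divn_eq n L).
rewrite (@drun_in_block _ _ _ (last_code xi (n %/ L))) ?ltn_pmod //; last first.
  by rewrite drun_blocks; case: allP => // -[j _].
suff -> : has (prefix (take (n %% L) (block xi (n %/ L)))) codes by [].
by apply/hasP; exists (block xi (n %/ L)); rewrite ?prefix_take.
Qed.

Lemma drun_live_blocks xi n : drun xi n != None -> forall j, j < n %/ L -> block xi j \in codes.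
Proof.
move=> live j j_lt; apply: contraNT live => not_code; apply/eqP.
apply: (@drun_dead _ (n %/ L * L)); last by rewrite leq_divM.
rewrite drun_blocks; case: allP => // /(_ j).
by rewrite mem_iota /= (negbTE not_code) => /(_ j_lt).
Qed.

Section States.

Variable states : seq dstate.
Hypothesis dstep_in : forall b x, x \in states -> dstep x b \in states.

Lemma foldl_dstep_in x u : x \in states -> foldl dstep x u \in states.
Proof. by elim: u x => //= b u IH x /(dstep_in b)/IH. Qed.

Definition decoder_aperiodic N := forall u x, x \in states ->
  foldl dstep x (wpow u N) = foldl dstep x (wpow u N.+1).

(* A transformation of [states] is represented by the list of the indices of
   the images of the states. *)
Definition transf u := [seq index (foldl dstep x u) states | x <- states].

(* The [let] makes [vm_compute] evaluate [transf [:: b]] only once. *)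
Definition transf_step (t : seq nat) (b : bool) :=
  let tb := transf [:: b] in [seq nth 0 tb i | i <- t].

Definition aperiodicity_certificate (Ms : seq (seq nat)) N :=
  [&& transf [::] \in Ms,
      all (fun t => (transf_step t false \in Ms) && (transf_step t true \in Ms)) Ms &
      all (fun t => all (fun i => iter N (nth 0 t) i == iter N.+1 (nth 0 t) i)
                        (iota 0 (size states))) Ms].

Lemma transf_rcons u b : transf (rcons u b) = transf_step (transf u) b.
Proof.
rewrite /transf_step /transf -map_comp; apply/eq_in_map => x x_in /=.
rewrite foldl_rcons (nth_map (None : dstate)) ?index_mem ?foldl_dstep_in //.
by rewrite nth_index ?foldl_dstep_in.
Qed.

Lemma iter_transf u m x : x \in states ->
  iter m (nth 0 (transf u)) (index x states) = index (foldl dstep x (wpow u m)) states.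
Proof.
move=> x_in; elim: m => [//|m IH].
rewrite iterS IH (nth_map (None : dstate)) ?index_mem ?foldl_dstep_in //.
by rewrite nth_index ?foldl_dstep_in // wpowSr foldl_cat.
Qed.

Lemma certificate_decoder_aperiodic Ms N :
  aperiodicity_certificate Ms N -> decoder_aperiodic N.
Proof.
case/and3P => id_in /allP step_in /allP stable.
have transf_in u : transf u \in Ms.
  elim/last_ind: u => // u b IH; rewrite transf_rcons.
  by case/andP: (step_in _ IH); case: b.
move=> u x x_in; apply: (@index_inj _ None states); rewrite ?foldl_dstep_in //.
rewrite -!iter_transf //; apply/eqP/(allP (stable _ (transf_in u))).
by rewrite mem_iota index_mem.
Qed.

End States.

Section Cascade.

Variables (MA MB : muller).
Variables (code_action : nat -> action) (death_action : action) (dead_action : bool -> action).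

Definition dout (x : dstate) (b : bool) : action :=
  if x is Some (l, p) then
    if has (prefix (rcons p b)) codes then
      if size (rcons p b) == L then code_action (index (rcons p b) codes) else Idle
    else death_action
  else dead_action b.

Definition cstep (xs : dstate * (mst MA + mst MB)) (b : bool) :=
  (dstep xs.1 b, act (dout xs.1 b) xs.2).

Definition crun (xi : word) n := foldl cstep (dinit, inl (minit MA)) (mkseq xi n).

Lemma crunS xi n : crun xi n.+1 = cstep (crun xi n) (xi n).
Proof. by rewrite /crun mkseqS foldl_rcons. Qed.

Lemma crunD xi n j : crun xi (n + j) = foldl cstep (crun xi n) (mkseq (fun t => xi (n + t)) j).
Proof. by rewrite /crun mkseqD foldl_cat. Qed.

Lemma foldl_cstep_fst xs w : (foldl cstep xs w).1 = foldl dstep xs.1 w.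
Proof. by elim: w xs => //= b w IH xs; rewrite IH. Qed.

Lemma crun_fst xi n : (crun xi n).1 = drun xi n.
Proof. exact: foldl_cstep_fst. Qed.

Fixpoint block_output (xi : word) m : mst MA + mst MB :=
  if m is m'.+1 then act (code_action (index (block xi m') codes)) (block_output xi m')
  else inl (minit MA).

Lemma block_outputS xi m :
  block_output xi m.+1 = act (code_action (index (block xi m) codes)) (block_output xi m).
Proof. by []. Qed.

Lemma foldl_cstep l p s w :
  has (prefix (p ++ w)) codes -> size p < L -> size p + size w <= L ->
  foldl cstep (Some (l, p), s) w =
  if size (p ++ w) == L then
    (Some (index (p ++ w) codes, [::]), act (code_action (index (p ++ w) codes)) s)
  else (Some (l, p ++ w), s).
Proof.
elim: w p s => [|b w IH] p s pre_pw p_lt p_w_le /=; first by rewrite cats0 ltn_eqF.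
rewrite /cstep /= -cat_rcons in pre_pw *.
rewrite /dstep /dout (has_prefix_catl pre_pw).
case: ifP => [/eqP size_pb | /eqP size_pb].
  have -> : w = [::] by apply: size0nil; move: p_w_le size_pb; rewrite size_rcons /=; lia.
  by rewrite cats0 size_pb eqxx.
by apply: IH; rewrite // size_rcons; move: size_pb p_w_le; rewrite size_rcons /=; lia.
Qed.

Lemma crun_codewords xi : (forall m, block xi m \in codes) -> forall n,
  crun xi n = (Some (last_code xi (n %/ L), take (n %% L) (block xi (n %/ L))),
               block_output xi (n %/ L)).
Proof.
move=> codewords.
have at_block m : crun xi (m * L) = (Some (last_code xi m, [::]), block_output xi m).
  elim: m => [//|m IH]; rewrite mulSnr crunD IH -/(block xi m).
  rewrite foldl_cstep /= ?has_prefix_full ?size_mkseq ?codewords //.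
  by rewrite eqxx.
move=> n; have r_lt : n %% L < L by rewrite ltn_pmod.
rewrite {1}(divn_eq n L) crunD at_block.
have -> : mkseq (fun t => xi (n %/ L * L + t)) (n %% L) = take (n %% L) (block xi (n %/ L)).
  by rewrite /block take_mkseq // ltnW.
rewrite foldl_cstep /= ?size_takel ?size_mkseq ?(ltn_eqF r_lt) ?(ltnW r_lt) //.
by apply/hasP; exists (block xi (n %/ L)); rewrite ?prefix_take.
Qed.

Lemma crun_dead xi n t : drun xi n = None ->
  crun xi (n + t) =
  (None, acts (crun xi n).2 [seq dead_action b | b <- mkseq (fun j => xi (n + j)) t]).
Proof.
rewrite -crun_fst crunD; case: (crun xi n) => x s /= ->.
by elim: (mkseq _ t) s => //= b w IH s; rewrite IH.
Qed.

Lemma crun_death xi n : drun xi n != None -> drun xi n.+1 = None ->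
  (crun xi n.+1).2 = act death_action (crun xi n).2.
Proof.
rewrite -!crun_fst crunS; case: (crun xi n) => [[[l p]|] s] //= _.
by rewrite /dstep /dout; case: ifP => // _; case: ifP.
Qed.

Variable states : seq dstate.
Hypothesis dinit_in : dinit \in states.
Hypothesis dstep_in : forall b x, x \in states -> dstep x b \in states.

Definition cstate : finType := (seq_sub states * (mst MA + mst MB))%type.

Definition cascade (table : pred {set cstate}) : muller :=
  @Muller cstate (SeqSub dinit_in, inl (minit MA))
    (fun q b => (SeqSub (dstep_in b (ssvalP q.1)), act (dout (ssval q.1) b) q.2))
    [set S | table S].

Variable table : pred {set cstate}.

Lemma run_cascade xi n :
  (ssval (run (cascade table) xi n).1, (run (cascade table) xi n).2) = crun xi n.
Proof. by elim: n => [//|n IH]; rewrite crunS -IH. Qed.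

Lemma run_cascade_fst xi n : ssval (run (cascade table) xi n).1 = drun xi n.
Proof. by rewrite -crun_fst -run_cascade. Qed.

Lemma run_cascade_snd xi n : (run (cascade table) xi n).2 = (crun xi n).2.
Proof. by rewrite -run_cascade. Qed.

Lemma accepts_cascade xi : accepts (cascade table) xi <-> table (inf_set (cascade table) xi).
Proof. by rewrite acceptsE inE. Qed.

Fixpoint douts (x : dstate) (w : seq bool) : seq action :=
  if w is b :: w' then dout x b :: douts (dstep x b) w' else [::].

Lemma douts_cat x u v : douts x (u ++ v) = douts x u ++ douts (foldl dstep x u) v.
Proof. by elim: u x => //= b u IH x; rewrite IH. Qed.

Lemma delta_star_cascade (q : mst (cascade table)) w :
  ssval (delta_star q w).1 = foldl dstep (ssval q.1) w /\
  (delta_star q w).2 = acts q.2 (douts (ssval q.1) w).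
Proof. by elim: w q => // b w IH q; apply: IH. Qed.

(* After [wpow u N] the decoder is in a fixpoint [y] of [u], from where its
   outputs on powers of [u] are powers of a single action word. *)
Lemma cascade_aperiodic N : decoder_aperiodic states N ->
  aperiodic_aut MA -> aperiodic_aut MB -> aperiodic_aut (cascade table).
Proof.
move=> stable_dec apA apB; have [NB stable_bot] := bottom_aperiodic apA apB.
exists (N + NB) => u q; have x_in := ssvalP q.1; set x := ssval q.1 in x_in.
set y := foldl dstep x (wpow u N).
have y_fixed : foldl dstep y u = y by rewrite -foldl_cat -wpowSr -stable_dec.
have y_pow m : foldl dstep y (wpow u m) = y /\ douts y (wpow u m) = wpow (douts y u) m.
  by elim: m => // m [IH1 IH2]; rewrite wpowS foldl_cat y_fixed IH1 douts_cat y_fixed IH2.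
have pow m : ssval (delta_star q (wpow u (N + m))).1 = y /\
    (delta_star q (wpow u (N + m))).2 = acts (acts q.2 (douts x (wpow u N))) (wpow (douts y u) m).
  have [-> ->] := delta_star_cascade q (wpow u (N + m)).
  by rewrite wpowD foldl_cat douts_cat (y_pow m).1 (y_pow m).2 /acts foldl_cat.
rewrite -addnS; have [fst1 snd1] := pow NB; have [fst2 snd2] := pow NB.+1.
rewrite [LHS]surjective_pairing [RHS]surjective_pairing snd1 snd2 stable_bot.
by congr pair; apply: val_inj; rewrite /= fst1 fst2.
Qed.

End Cascade.

End Decoder.

(** * The decoders for the codes f and g *)

(* [bit3 false] and [bit3 true], written so that they evaluate: [inord] does not. *)
Definition zero3 : 'I_3 := @Ordinal 3 0 isT.
Definition one3 : 'I_3 := @Ordinal 3 1 isT.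

Definition codes_f : seq (seq bool) := [:: tilde zero3; tilde one3; tilde two3].
Definition codes_g : seq (seq bool) := [:: tilde zero3 ++ tilde two3; tilde one3 ++ tilde two3].

Definition states_of L (codes : seq (seq bool)) : seq dstate :=
  None :: [seq Some (l, p) | l <- iota 0 (size codes),
                             p <- undup [seq take i c | c <- codes, i <- iota 0 L]].

Definition states_f := states_of 6 codes_f.
Definition states_g := states_of 12 codes_g.

Lemma dstep_inP L codes states :
  all (fun x => (dstep L codes x false \in states) && (dstep L codes x true \in states)) states ->
  forall b x, x \in states -> dstep L codes x b \in states.
Proof. by move=> /allP closed [] x /closed /andP []. Qed.

Lemma dinit_in_f : dinit \in states_f. Proof. by vm_compute. Qed.
Lemma dinit_in_g : dinit \in states_g. Proof. by vm_compute. Qed.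

Lemma dstep_in_f b x : x \in states_f -> dstep 6 codes_f x b \in states_f.
Proof. by apply: dstep_inP; vm_compute. Qed.

Lemma dstep_in_g b x : x \in states_g -> dstep 12 codes_g x b \in states_g.
Proof. by apply: dstep_inP; vm_compute. Qed.

(* Only a certificate generator: its output is checked by
   [certificate_decoder_aperiodic], so nothing needs to be proved about it. *)
Fixpoint closure (next : seq nat -> seq (seq nat)) fuel (todo seen : seq (seq nat)) :=
  if fuel is fuel'.+1 then
    if todo is t :: todo' then
      let fresh := undup [seq t' <- next t | t' \notin seen] in
      closure next fuel' (fresh ++ todo') (fresh ++ seen)
    else seen
  else seen.

Definition transf_monoid L codes states :=
  let id := transf L codes states [::] in
  closure (fun t => [:: transf_step L codes states t false; transf_step L codes states t true])
          1000 [:: id] [:: id].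

Lemma decoder_f_aperiodic : decoder_aperiodic 6 codes_f states_f 5.
Proof.
apply: (certificate_decoder_aperiodic (Ms := transf_monoid 6 codes_f states_f) dstep_in_f).
by vm_compute.
Qed.

Lemma decoder_g_aperiodic : decoder_aperiodic 12 codes_g states_g 5.
Proof.
apply: (certificate_decoder_aperiodic (Ms := transf_monoid 12 codes_g states_g) dstep_in_g).
by vm_compute.
Qed.

Lemma tilde_in (c : 'I_3) : tilde c \in codes_f.
Proof. by case: c => [[|[|[|n]]] ?]. Qed.

Lemma index_tilde (c : 'I_3) : index (tilde c) codes_f = c.
Proof. by case: c => [[|[|[|n]]] ?]. Qed.

Lemma nth_codes_f (c : 'I_3) : nth [::] codes_f c = tilde c.
Proof. by case: c => [[|[|[|n]]] ?]. Qed.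

Lemma size_tilde (c : 'I_3) : size (tilde c) = 6.
Proof. by case: c => [[|[|[|n]]] ?]. Qed.

Lemma tilde_inj : injective tilde.
Proof. by move=> c d tcd; apply: val_inj; rewrite /= -index_tilde tcd index_tilde. Qed.

Lemma val_bit3 b : bit3 b = b :> nat.
Proof. by rewrite /bit3 inordK //; case: b. Qed.

Lemma bit3_val (c : 'I_3) : c != two3 -> bit3 (val c == 1) = c.
Proof.
by move=> c_neq2; apply: val_inj => /=; rewrite val_bit3; case: c c_neq2 => [[|[|[|n]]] ?].
Qed.

Lemma f_code_block zeta m j : j < 6 -> f_code zeta (m * 6 + j) = nth false (tilde (zeta m)) j.
Proof. by move=> j_lt; rewrite /f_code divnMDl // divn_small // addn0 modnMDl modn_small. Qed.

Lemma block_f_code zeta m : block 6 (f_code zeta) m = tilde (zeta m).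
Proof.
rewrite /block -[RHS](mkseq_nth false) size_tilde.
by apply: eq_in_mkseq => j j_lt; rewrite f_code_block.
Qed.

Lemma last_code_f_code zeta m : last_code 6 codes_f (f_code zeta) m.+1 = zeta m.
Proof. by rewrite /last_code block_f_code index_tilde. Qed.

Lemma f_code_codewords xi :
  (forall m, block 6 xi m \in codes_f) -> exists zeta, xi = f_code zeta.
Proof.
move=> codewords; exists (fun m => inord (index (block 6 xi m) codes_f)).
apply: functional_extensionality => n; rewrite /f_code -nth_codes_f inordK; last first.
  by have := codewords (n %/ 6); rewrite -index_mem.
by rewrite nth_index // /block nth_mkseq ?ltn_pmod // -divn_eq.
Qed.

Lemma block_f_code_in zeta m : block 6 (f_code zeta) m \in codes_f.
Proof. by rewrite block_f_code tilde_in. Qed.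

Lemma f_image_or_dead xi :
  (exists n, drun 6 codes_f xi n = None) \/ exists zeta, xi = f_code zeta.
Proof.
have [dead | live] := classic (exists n, drun 6 codes_f xi n = None); [by left | right].
apply: f_code_codewords => m; apply: (@drun_live_blocks 6 codes_f isT isT isT xi (m.+1 * 6)).
  by apply/eqP => dead; apply: live; exists (m.+1 * 6).
by rewrite mulnK.
Qed.

Lemma f_code_factor_two zeta n : factor6 (f_code zeta) n = tilde two3 ->
  n %% 6 = 0 /\ zeta (n %/ 6) = two3.
Proof.
move=> factor_n.
have bit j : j < 6 -> f_code zeta (n + j) = nth false (tilde two3) j.
  by move=> j_lt; rewrite -factor_n /factor6 nth_mkseq.
suff r0 : n %% 6 = 0.
  split=> //; apply: tilde_inj; rewrite -block_f_code -factor_n /factor6 /block.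
  by have -> : n %/ 6 * 6 = n by rewrite {2}(divn_eq n 6) r0 addn0.
have := bit 0 isT; have := bit 1 isT; rewrite addn0 addn1 {1 2}(divn_eq n 6) -addnS.
have : n %% 6 < 6 by rewrite ltn_pmod.
case: (n %% 6) => [|[|[|[|[|[|r]]]]]] //= _.
1-4: by rewrite !f_code_block //; case: (zeta (n %/ 6)) => [[|[|[|?]]] ?].
by move=> _; rewrite f_code_block //; case: (zeta (n %/ 6)) => [[|[|[|?]]] ?].
Qed.

Lemma drun_f_code zeta n : drun 6 codes_f (f_code zeta) n =
  Some (last_code 6 codes_f (f_code zeta) (n %/ 6), take (n %% 6) (block 6 (f_code zeta) (n %/ 6))).
Proof. exact: (@drun_codewords 6 codes_f isT isT isT _ (block_f_code_in zeta)). Qed.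

Lemma bit3_neq2 b : bit3 b != two3.
Proof. by apply/eqP => /(congr1 val) /=; rewrite val_bit3; case: b. Qed.

(** * The operations [q_i] *)

Definition q_action (i : nat) : action :=
  if i == 0 then Feed false else if i == 1 then Feed true else Restart.

Definition unsum (T : Type) (s : T + T) : T := match s with inl a => a | inr a => a end.

(* Visited infinitely often exactly in the first case of [q_op]. *)
Definition q_trivial (x : dstate) : bool := if x is Some (l, _) then l == 2 else true.

Section QAutomaton.

Variables (M : muller) (b : bool).

Definition q_proj (q : cstate M M states_f) : option (mst M) := Some (unsum q.2).

(* Unless the decoder dies, the second component eventually stays in one of
   the two copies of [M], which can therefore be merged. *)
Definition q_table (S : {set cstate M M states_f}) : bool :=
  if [exists q in S, q_trivial (ssval q.1)] then b else proj_set q_proj S \in macc M.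

Definition q_automaton : muller :=
  cascade q_action Idle (fun _ => Idle) dinit_in_f dstep_in_f q_table.

Lemma q_automaton_trivial xi :
  infinitely (fun n => q_trivial (drun 6 codes_f xi n)) -> accepts q_automaton xi <-> b.
Proof.
move=> trivial_inf; rewrite accepts_cascade /q_table.
suff -> : [exists q in inf_set q_automaton xi, q_trivial (ssval q.1)] by [].
apply/(@exists_inf_setP q_automaton xi (fun q => q_trivial (ssval q.1))) => N.
by have [n [Nn trivial_n]] := trivial_inf N; exists n; rewrite run_cascade_fst.
Qed.

Notation q_output zeta := (block_output 6 codes_f M M q_action (f_code zeta)).

Lemma q_outputS zeta m : q_output zeta m.+1 = act (q_action (zeta m)) (q_output zeta m).
Proof. by rewrite -index_tilde -block_f_code. Qed.

Lemma q_automaton_f_code zeta eta N :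
  (forall m, N <= m -> zeta m != two3) ->
  (forall m, N <= m -> unsum (q_output zeta m) = run M eta (m - N)) ->
  accepts q_automaton (f_code zeta) <-> accepts M eta.
Proof.
move=> not_two simulates.
have crun_n n := @crun_codewords 6 codes_f isT isT isT M M q_action Idle (fun _ => Idle) _
  (block_f_code_in zeta) n.
rewrite accepts_cascade /q_table.
have -> : [exists q in inf_set q_automaton (f_code zeta), q_trivial (ssval q.1)] = false.
  apply/negbTE/negP.
  move=> /(@exists_inf_setP q_automaton _ (fun q => q_trivial (ssval q.1))).
  move=> /(_ (N.+1 * 6)) [n [n_ge]]; have m_gt : N < n %/ 6 by rewrite leq_divRL.
  rewrite run_cascade_fst drun_f_code /= -(ltn_predK m_gt) last_code_f_code.
  by apply/negP/not_two; rewrite -ltnS (ltn_predK m_gt).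
rewrite (@proj_inf_set q_automaton M q_proj _ eta (N * 6) 6) ?acceptsE // => n n_ge.
rewrite /q_proj run_cascade_snd crun_n /= divnBMl simulates //.
by rewrite leq_divRL.
Qed.

Lemma q_automaton_case2 xi eta : q_case2 xi eta -> accepts q_automaton xi <-> accepts M eta.
Proof.
move/functional_extensionality ->.
apply: (q_automaton_f_code (N := 0)) => [m _ | m _]; first exact: bit3_neq2.
rewrite subn0; elim: m => // m IH.
by rewrite q_outputS val_bit3; case: (q_output _ m) IH => x //= ->; case: (eta m).
Qed.

Lemma q_automaton_case3 xi eta : q_case3 xi eta -> accepts q_automaton xi <-> accepts M eta.
Proof.
case=> sigma /functional_extensionality ->.
set zeta := prepend _ _; set K := size sigma.
have zeta_K : zeta K = two3 by rewrite /zeta /prepend size_rcons ltnSn nth_rcons ltnn eqxx.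
have zeta_after t : zeta (K.+1 + t) = bit3 (eta t).
  by rewrite /zeta /prepend size_rcons ltnNge leq_addr /= addKn.
have output_after t : q_output zeta (K.+1 + t) = inr (run M eta t).
  elim: t => [|t IH]; first by rewrite addn0 q_outputS zeta_K.
  by rewrite addnS q_outputS IH zeta_after val_bit3 /=; case: (eta t).
apply: (q_automaton_f_code (N := K.+1)) => m /subnKC <-.
- by rewrite zeta_after bit3_neq2.
- by rewrite output_after addKn.
Qed.

Lemma q_automaton_aperiodic : aperiodic_aut M -> aperiodic_aut q_automaton.
Proof. by move=> apM; apply: (cascade_aperiodic _ _ _ _ _ _ decoder_f_aperiodic apM apM). Qed.

End QAutomaton.

Lemma q_case1_trivial xi : q_case1 xi -> infinitely (fun n => q_trivial (drun 6 codes_f xi n)).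
Proof.
move=> case1 N; have [[n0 dead] | [zeta xi_eq]] := f_image_or_dead xi.
  by exists (maxn N n0); rewrite (drun_dead dead) ?leq_maxl ?leq_maxr.
case: case1 => [[] | two_inf]; first by exists zeta; rewrite xi_eq.
have [n [Nn factor_n]] := two_inf N; subst xi.
have [r0 zeta_2] := f_code_factor_two factor_n.
exists ((n %/ 6).+1 * 6); split.
  by apply: leq_trans Nn _; rewrite {1}(divn_eq n 6) r0 addn0 mulSnr leq_addr.
by rewrite drun_f_code mulnK // last_code_f_code zeta_2.
Qed.

Lemma eventually_no_two (zeta : nat -> 'I_3) N : (forall m, N <= m -> zeta m != two3) ->
  (exists eta : word, zeta =1 (fun n => bit3 (eta n))) \/
  exists (sigma : seq 'I_3) (eta : word),
    zeta =1 prepend (rcons sigma two3) (fun n => bit3 (eta n)).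
Proof.
move=> not_two; have [[m0 two_m0] | no_two] := classic (exists m, zeta m = two3); last first.
  left; exists (fun m => val (zeta m) == 1) => m.
  by rewrite bit3_val //; apply/eqP => two; apply: no_two; exists m.
have two_ex : exists m, zeta m == two3 by exists m0; rewrite two_m0.
have two_le m : zeta m == two3 -> m <= N.
  by move=> two_m; rewrite leqNgt; apply: contraTN two_m => /ltnW /not_two.
right; case: (ex_maxnP two_ex two_le) => K /eqP two_K max_K.
exists (mkseq zeta K), (fun t => val (zeta (K.+1 + t)) == 1) => n.
rewrite /prepend size_rcons size_mkseq nth_rcons size_mkseq.
case: (ltngtP n K) => [n_lt | n_gt | ->]; last by rewrite ltnSn.
  by rewrite ltnS ltnW // nth_mkseq.
rewrite ltnNge n_gt /= subnKC // bit3_val //.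
by apply: contraTN n_gt => /max_K; rewrite leqNgt.
Qed.

Lemma q_cases xi : ~ q_case1 xi -> (exists eta, q_case2 xi eta) \/ (exists eta, q_case3 xi eta).
Proof.
move=> /not_or_and [/NNPP [zeta xi_eq] /not_all_ex_not [N no_two]].
have not_two m : N <= m -> zeta m != two3.
  move=> m_ge; apply/eqP => two_m; apply: no_two; exists (m * 6); split; first by lia.
  by rewrite /factor6 (eq_mkseq (fun j => xi_eq (m * 6 + j))) -two_m; apply: block_f_code.
have [[eta zeta_eq] | [sigma [eta zeta_eq]]] := eventually_no_two not_two; [left | right].
  by exists eta => n; rewrite xi_eq /f_code zeta_eq.
by exists eta, sigma => n; rewrite xi_eq /f_code zeta_eq.
Qed.

Lemma q_op_accepts k (i j : 'I_k) (A : kpart k) (M : muller) :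
  (forall eta, A eta = j <-> accepts M eta) ->
  forall xi, q_op i A xi = j <-> accepts (q_automaton M (i == j)) xi.
Proof.
move=> A_M xi; rewrite /q_op.
case: excluded_middle_informative => [case1 | not_case1].
  by rewrite q_automaton_trivial; [split=> [-> | /eqP] | exact: q_case1_trivial].
case: excluded_middle_informative => [case2 | no_case2].
  by case: constructive_indefinite_description => eta /= /q_automaton_case2 ->.
case: excluded_middle_informative => [case3 | no_case3].
  by case: constructive_indefinite_description => eta /= /q_automaton_case3 ->.
by case: (q_cases not_case1) => [/no_case2 | /no_case3].
Qed.

(** * The operation [dot_op] *)

Lemma g_fin1 b : g_fin [:: b] = nth [::] codes_g b.
Proof.
rewrite /g_fin /= cats0.
have -> : bit3 b = if b then one3 else zero3 by apply: val_inj => /=; rewrite val_bit3; case: b.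
by case: b.
Qed.

Lemma g_fin1_in b : g_fin [:: b] \in codes_g.
Proof. by rewrite g_fin1; case: b. Qed.

Lemma index_g_fin1 b : index (g_fin [:: b]) codes_g = b.
Proof. by rewrite g_fin1; case: b. Qed.

Lemma size_g_fin1 b : size (g_fin [:: b]) = 12.
Proof. by rewrite g_fin1; case: b. Qed.

Lemma g_fin1_index c : c \in codes_g -> c = g_fin [:: index c codes_g == 1].
Proof. by rewrite !inE => /orP [] /eqP ->; rewrite g_fin1. Qed.

Lemma g_code_block eta m j : j < 12 -> g_code eta (m * 12 + j) = nth false (g_fin [:: eta m]) j.
Proof.
move=> j_lt; rewrite /g_code divnMDl // divn_small // addn0 modnMDl modn_small //.
by rewrite /g_fin /= cats0 nth_cat size_tilde; case: ifP.
Qed.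

Lemma block_g_code eta m : block 12 (g_code eta) m = g_fin [:: eta m].
Proof.
rewrite /block -[RHS](mkseq_nth false) size_g_fin1.
by apply: eq_in_mkseq => j j_lt; rewrite g_code_block.
Qed.

Lemma block_g_code_in eta m : block 12 (g_code eta) m \in codes_g.
Proof. by rewrite block_g_code g_fin1_in. Qed.

Lemma g_code_codewords xi :
  (forall m, block 12 xi m \in codes_g) -> exists eta, xi = g_code eta.
Proof.
move=> codewords; exists (fun m => index (block 12 xi m) codes_g == 1).
apply: functional_extensionality => n; rewrite {2}(divn_eq n 12) g_code_block ?ltn_pmod //.
by rewrite -g_fin1_index // /block nth_mkseq ?ltn_pmod // -divn_eq.
Qed.

Lemma g_fin_mkseq eta m : g_fin (mkseq eta m) = mkseq (g_code eta) (m * 12).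
Proof.
elim: m => // m IH; rewrite mkseqS mulSnr mkseqD /g_fin map_rcons flatten_rcons -/(g_fin _) IH.
by rewrite -/(block 12 (g_code eta) m) block_g_code /g_fin /= cats0.
Qed.

Lemma drun_g_code_live eta n : drun 12 codes_g (g_code eta) n != None.
Proof. by rewrite (@drun_codewords 12 codes_g isT isT isT _ (block_g_code_in eta)). Qed.

Lemma drun_live_g_prefix xi n : drun 12 codes_g xi n != None ->
  exists eta, forall j, j < n -> g_code eta j = xi j.
Proof.
move=> live; set m := n %/ 12; set r := n %% 12.
have r_lt : r < 12 by rewrite ltn_pmod.
have codewords : forall j, j < m -> block 12 xi j \in codes_g :=
  @drun_live_blocks 12 codes_g isT isT isT _ _ live.
have at_m : drun 12 codes_g xi (m * 12) = Some (last_code 12 codes_g xi m, [::]).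
  by rewrite drun_blocks //; case: allP => // -[j]; rewrite mem_iota => /codewords.
move: live; rewrite {1}(divn_eq n 12) (@drun_in_block 12 codes_g isT isT isT _ _ _ _ r_lt at_m).
case: ifP => // /hasP [c c_in]; rewrite prefixE size_takel ?size_mkseq ?(ltnW r_lt) //.
move=> /eqP prefix_c _.
exists (fun j => index (if j < m then block 12 xi j else c) codes_g == 1) => j j_lt.
rewrite {1}(divn_eq j 12) g_code_block ?ltn_pmod //; case: ifP => [j_m | /negbT].
  by rewrite -g_fin1_index ?codewords // /block nth_mkseq ?ltn_pmod // -divn_eq.
rewrite -leqNgt => m_le; have j_m : j %/ 12 = m.
  by apply/eqP; rewrite eqn_leq m_le -ltnS ltn_divLR //; lia.
have r_j : j %% 12 < r by move: j_lt; rewrite {1}(divn_eq n 12) {1}(divn_eq j 12) j_m; lia.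
rewrite -g_fin1_index // -(nth_take _ r_j) prefix_c nth_take // /block nth_mkseq.
  by rewrite -j_m -divn_eq.
exact: ltn_trans r_j r_lt.
Qed.

Lemma g_bad_mkseq xi n : g_bad (mkseq xi n) <-> drun 12 codes_g xi n = None.
Proof.
split=> [bad | dead eta agree].
  apply: NNPP => /eqP /drun_live_g_prefix [eta eta_xi]; apply: (bad eta) => j.
  by rewrite size_mkseq => j_lt; rewrite nth_mkseq // eta_xi.
have := drun_g_code_live eta n; rewrite (@eq_drun _ _ _ xi) ?dead // => j j_lt.
by have := agree j; rewrite size_mkseq nth_mkseq // => ->.
Qed.

(* The decoder dies exactly on the last letter of [g(u) v]. *)
Lemma dot_case2_death xi eta : dot_case2 xi eta -> exists n0,
  [/\ drun 12 codes_g xi n0 != None, drun 12 codes_g xi n0.+1 = None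
    & forall t, xi (n0.+1 + t) = eta t].
Proof.
case=> u [v] [v_neq0 xi_eq bad minimal]; set w := g_fin u ++ v in xi_eq bad.
have w_eq : w = mkseq xi (size w).
  rewrite -[LHS](mkseq_nth false); apply: eq_in_mkseq => j j_lt.
  by rewrite xi_eq /prepend j_lt (set_nth_default false).
have size_v : 0 < size v by case: (v) v_neq0.
exists (size w).-1; rewrite prednK; last by rewrite size_cat; lia.
split; last by move=> t; rewrite xi_eq /prepend ltnNge leq_addr /= addKn.
- have := minimal (size v).-1; rewrite ltn_predL => /(_ size_v).
  have -> : g_fin u ++ take (size v).-1 v = take (size w).-1 w.
    by rewrite /w take_cat size_cat -!subn1 -addnBA // ltnNge leq_addr /= addKn.
  by rewrite {2}w_eq take_mkseq ?leq_pred // g_bad_mkseq => /eqP.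
- by move: bad; rewrite w_eq g_bad_mkseq size_mkseq.
Qed.

Lemma dot_cases xi : ~ (exists eta, xi =1 g_code eta) -> exists eta, dot_case2 xi eta.
Proof.
move=> not_image.
have : exists n, drun 12 codes_g xi n == None.
  apply: NNPP => no_death; apply: not_image.
  have [eta ->] : exists eta, xi = g_code eta.
    apply: g_code_codewords => m; apply: (@drun_live_blocks 12 codes_g isT isT isT _ (m.+1 * 12)).
      by apply/negP => dead; apply: no_death; exists (m.+1 * 12).
    by rewrite mulnK.
  by exists eta.
case/ex_minnP => n /eqP dead min_n; have n_gt0 : 0 < n by case: n dead {min_n}.
have live k : k < n -> drun 12 codes_g xi k != None.
  by move=> k_lt; apply: contraTN k_lt => /min_n; rewrite -leqNgt.
set m := n.-1 %/ 12; have m_le : m * 12 <= n.-1 by apply: leq_divM.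
have pred_lt : n.-1 < n by rewrite ltn_predL.
have [zeta zeta_xi] := drun_live_g_prefix (live n.-1 pred_lt).
have g_fin_u : g_fin (mkseq zeta m) = mkseq xi (m * 12).
  by rewrite g_fin_mkseq; apply: eq_in_mkseq => j j_lt; apply: zeta_xi; lia.
set v := mkseq (fun t => xi (m * 12 + t)) (n - m * 12).
have w_eq : g_fin (mkseq zeta m) ++ v = mkseq xi n by rewrite g_fin_u -mkseqD subnKC //; lia.
exists (fun t => xi (n + t)), (mkseq zeta m), v; split.
- by rewrite -size_eq0 size_mkseq; lia.
- move=> j; rewrite w_eq /prepend size_mkseq; case: ltnP => j_n; first by rewrite nth_mkseq.
  by rewrite subnKC.
- by rewrite w_eq g_bad_mkseq.
- move=> k; rewrite size_mkseq => k_lt; rewrite g_fin_u take_mkseq 1?ltnW // -mkseqD.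
  by rewrite g_bad_mkseq; apply/eqP/live; lia.
Qed.

Definition dot_action (i : nat) : action := Feed (i == 1).

Section DotAutomaton.

Variables MA MB : muller.

Definition left_state (q : cstate MA MB states_g) : option (mst MA) :=
  if q.2 is inl a then Some a else None.
Definition right_state (q : cstate MA MB states_g) : option (mst MB) :=
  if q.2 is inr a then Some a else None.

(* States of [MB] are visited infinitely often iff the decoder dies. *)
Definition dot_table (S : {set cstate MA MB states_g}) : bool :=
  if proj_set right_state S == set0 then proj_set left_state S \in macc MA
  else proj_set right_state S \in macc MB.

Definition dot_automaton : muller :=
  cascade dot_action Restart Feed dinit_in_g dstep_in_g dot_table.

Lemma dot_automaton_g_code eta : accepts dot_automaton (g_code eta) <-> accepts MA eta.
Proof.
have crun_n n :=
  @crun_codewords 12 codes_g isT isT isT MA MB dot_action Restart Feed _ (block_g_code_in eta) n.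
have output m : block_output 12 codes_g MA MB dot_action (g_code eta) m = inl (run MA eta m).
  by elim: m => // m IH; rewrite block_outputS IH block_g_code index_g_fin1 /=; case: (eta m).
rewrite accepts_cascade /dot_table (@proj_inf_set0 dot_automaton _ right_state _ 0); last first.
  by move=> n _; rewrite /right_state run_cascade_snd crun_n output.
rewrite eqxx (@proj_inf_set dot_automaton MA left_state _ eta 0 12) ?acceptsE // => n _.
by rewrite /left_state run_cascade_snd crun_n output subn0.
Qed.

Lemma dot_automaton_death xi eta n0 :
  drun 12 codes_g xi n0 != None -> drun 12 codes_g xi n0.+1 = None ->
  (forall t, xi (n0.+1 + t) = eta t) -> accepts dot_automaton xi <-> accepts MB eta.
Proof.
move=> live dead tail.
have snd_after t :
    (crun 12 codes_g MA MB dot_action Restart Feed xi (n0.+1 + t)).2 = inr (run MB eta t).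
  rewrite crun_dead // crun_death //= acts_feed run_delta_star.
  by congr (inr (delta_star _ _)); apply: eq_in_mkseq => j _.
rewrite accepts_cascade /dot_table.
rewrite (@proj_inf_set dot_automaton MB right_state _ eta n0.+1 1) // => [|n n_ge].
  by rewrite (negbTE (inf_set_neq0 _ _)) acceptsE.
by rewrite /right_state run_cascade_snd -(subnKC n_ge) snd_after addKn divn1.
Qed.

Lemma dot_automaton_aperiodic :
  aperiodic_aut MA -> aperiodic_aut MB -> aperiodic_aut dot_automaton.
Proof. exact: (cascade_aperiodic _ _ _ _ _ _ decoder_g_aperiodic). Qed.

End DotAutomaton.

Lemma dot_op_accepts k (A B : kpart k) (j : 'I_k) (MA MB : muller) :
  (forall eta, A eta = j <-> accepts MA eta) -> (forall eta, B eta = j <-> accepts MB eta) ->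
  forall xi, dot_op A B xi = j <-> accepts (dot_automaton MA MB) xi.
Proof.
move=> A_MA B_MB xi; rewrite /dot_op.
case: excluded_middle_informative => [image | not_image].
  case: constructive_indefinite_description => eta /= /functional_extensionality ->.
  by rewrite dot_automaton_g_code.
case: excluded_middle_informative => [case2 | no_case2]; last first.
  by case: no_case2; apply: dot_cases.
case: constructive_indefinite_description => eta /= /dot_case2_death [n0 [live dead tail]].
by rewrite (dot_automaton_death MA MB live dead tail).
Qed.

Theorem lemma4p2 (k : nat) (hk : 2 <= k) :
  [/\ (forall (i : 'I_k) (A : kpart k), A_class A -> A_class (q_op i A)),
      (forall A B : kpart k, A_class A -> A_class B -> A_class (dot_op A B)),
      (forall (i : 'I_k) (A : kpart k), R_class A -> R_class (q_op i A))
    & (forall A B : kpart k, R_class A -> R_class B -> R_class (dot_op A B))].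
Proof.
split.
- move=> i A A_aper j; have [M [M_aper A_M]] := A_aper j.
  exists (q_automaton M (i == j)); split; [exact: q_automaton_aperiodic | exact: q_op_accepts].
- move=> A B A_aper B_aper j.
  have [MA [MA_aper A_MA]] := A_aper j; have [MB [MB_aper B_MB]] := B_aper j.
  exists (dot_automaton MA MB); split; [exact: dot_automaton_aperiodic | exact: dot_op_accepts].
- move=> i A A_reg j; have [M A_M] := A_reg j.
  by exists (q_automaton M (i == j)); apply: q_op_accepts.
- move=> A B A_reg B_reg j; have [MA A_MA] := A_reg j; have [MB B_MB] := B_reg j.
  by exists (dot_automaton MA MB); apply: dot_op_accepts.
Qed.
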